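(* Let $b\ge1$, $c_{\mathrm{ov}}\ge0$, $c_i>0$, $c_i^\sharp\ge0$, $d_i:=c_{\mathrm{ov}}+\sum_{j\ge i}(c_j+c_j^\sharp)$, $L^1_{i,\{k,\dots,b\}}\ge0$, and consider the program $\min\sum_id_iq_i$ subject to $q\ge0$ and $g_i(q):=\left(\sum_{s=1}^iq_s\right)^2-\sum_{s=1}^iq_sL^1_{i,\{s,\dots,b\}}\ge0$ for $i\in[b]$. Let $q^\star$ be a KKT point, i.e. $q^\star$ is feasible and there are $\lambda_i,\eta_i\ge0$ with $0=d_k-\sum_{i=k}^b\lambda_i\big(2\sum_{s=1}^iq^\star_s-L^1_{i,\{k,\dots,b\}}\big)-\eta_k$ for all $k$, $\lambda_ig_i(q^\star)=0$ and $\eta_iq_i^\star=0$ for all $i$. If $\{j:q^\star_j>0\}=\{k\}$, then $$q^\star_k=\max_{i\ge k}L^1_{i,\{k,\dots,b\}}.$$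
   Context: This program is a reformulation of the cost minimization for randomized progressive training under layer-wise $(L^0,L^1)$-smoothness. *)

(* Indices are 1-based naturals 1..b. *)
From HB Require Import structures.
From mathcomp Require Import all_boot all_order all_algebra.
Set Implicit Arguments. Unset Strict Implicit. Unset Printing Implicit Defensive.
Import Order.TTheory GRing.Theory Num.Theory.
Local Open Scope ring_scope.

Definition dcoef (R : realFieldType) (b : nat) (cov : R) (c cs : nat -> R) (i : nat) : R :=
  cov + \sum_(i <= j < b.+1) (c j + cs j).

Definition psum (R : realFieldType) (q : nat -> R) (i : nat) : R :=
  \sum_(1 <= s < i.+1) q s.

(* L i k stands for L^1_{i,{k,...,b}}.
   g_i(q) := (sum_{s<=i} q_s)^2 - sum_{s<=i} q_s L^1_{i,{s..b}} *)
Definition gcon (R : realFieldType) (L : nat -> nat -> R) (q : nat -> R) (i : nat) : R :=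
  (psum q i) ^+ 2 - \sum_(1 <= s < i.+1) q s * L i s.

From HB Require Import structures.
From mathcomp Require Import all_boot all_order all_algebra.
From mathcomp Require Import lra.
Import Order.TTheory GRing.Theory Num.Theory.
Local Open Scope ring_scope.

(* When q is supported on {k}, every partial sum Q_i with i >= k equals q_k,
   so g_i(q) = q_k (q_k - L_{i,k}); feasibility gives q_k >= L_{i,k} for all
   i >= k.  Since eta_k = 0 and d_k > 0, stationarity at k forces some
   lambda_i, i >= k, to be nonzero, and complementary slackness then gives
   q_k = L_{i,k}: the bound is attained, so q_k is the maximum. *)

Lemma big_nat_supp1 (V : nmodType) m n k (F : nat -> V) :
  (m <= k < n)%N -> (forall s, (m <= s < n)%N -> s != k -> F s = 0) ->
  \sum_(m <= s < n) F s = F k.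
Proof.
move=> k_in F_off_k.
rewrite (bigD1_seq k) ?mem_index_iota ?iota_uniq //= big1_seq ?addr0 //.
by move=> s /andP[s_neq_k]; rewrite mem_index_iota => /F_off_k; apply.
Qed.

Lemma has_nonzero_summand (V : nmodType) (I : eqType) (r : seq I) (F : I -> V) :
  \sum_(i <- r) F i != 0 -> exists2 i, i \in r & F i != 0.
Proof.
have [/hasP[i ir Fi_neq0] _ | /hasPn all_zero] := boolP (has (fun i => F i != 0) r).
  by exists i.
by rewrite big1_seq ?eqxx // => i /andP[_ /all_zero]; rewrite negbK => /eqP.
Qed.

Lemma bigmax_seq_attained {d} {T : orderType d} {I : eqType} {r : seq I}
    {F : I -> T} {x0 x : T} i :
  (x0 <= x)%O -> i \in r -> F i = x -> (forall j, j \in r -> (F j <= x)%O) ->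
  \big[Order.max/x0]_(j <- r) F j = x.
Proof.
move=> x0_le_x ir Fi_eq F_le_x; apply/eqP; rewrite eq_le; apply/andP; split.
  by rewrite big_seq bigmax_le.
by rewrite -Fi_eq (le_bigmax_seq _ _ _ _ ir).
Qed.

Section SingletonSupport.

Context {R : realFieldType} {b k : nat} {q : nat -> R}.
Hypothesis k_in : (1 <= k <= b)%N.
Hypothesis q_off_k : forall s, (1 <= s <= b)%N -> s != k -> q s = 0.

Lemma sum_supp1 i (F : nat -> R) : (k <= i <= b)%N ->
  \sum_(1 <= s < i.+1) q s * F s = q k * F k.
Proof.
case/andP: k_in => k_ge1 _ /andP[k_le_i i_le_b].
apply: big_nat_supp1 => [|s /andP[s_ge1 s_le_i] s_neq_k]; first by rewrite k_ge1.
by rewrite q_off_k ?mul0r // s_ge1 (leq_trans _ i_le_b).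
Qed.

Lemma psum_supp1 i : (k <= i <= b)%N -> psum q i = q k.
Proof.
move=> i_in; have := @sum_supp1 i (fun=> 1) i_in; rewrite mulr1 => <-.
by apply: eq_bigr => s _; rewrite mulr1.
Qed.

Lemma gcon_supp1 (L : nat -> nat -> R) i : (k <= i <= b)%N ->
  gcon L q i = q k * (q k - L i k).
Proof. by move=> i_in; rewrite /gcon psum_supp1 // sum_supp1 // mulrBr expr2. Qed.

End SingletonSupport.

Lemma dcoef_gt0 (R : realFieldType) (b : nat) (cov : R) (c cs : nat -> R) k :
  (1 <= k <= b)%N -> 0 <= cov ->
  (forall i, (1 <= i <= b)%N -> 0 < c i) ->
  (forall i, (1 <= i <= b)%N -> 0 <= cs i) ->
  0 < dcoef b cov c cs k.
Proof.
move=> /andP[k_ge1 k_le_b] cov_ge0 c_gt0 cs_ge0.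
have k_in : (1 <= k <= b)%N by rewrite k_ge1.
have tail_ge0 : 0 <= \sum_(k.+1 <= j < b.+1) (c j + cs j).
  rewrite big_seq_cond; apply: sumr_ge0 => j; rewrite mem_index_iota andbT.
  rewrite ltnS => /andP[k_lt_j j_le_b]; have j_in : (1 <= j <= b)%N.
    by rewrite j_le_b (leq_trans k_ge1 (ltnW k_lt_j)).
  by rewrite addr_ge0 ?cs_ge0 ?ltW ?c_gt0.
rewrite /dcoef big_ltn ?ltnS //.
by have := c_gt0 k k_in; have := cs_ge0 k k_in; lra.
Qed.

Theorem lemma5 (R : realFieldType) (b : nat) (cov : R) (c cs : nat -> R)
  (L : nat -> nat -> R) (q lam eta : nat -> R) (k : nat) :
  (1 <= b)%N ->
  0 <= cov ->
  (forall i, (1 <= i <= b)%N -> 0 < c i) ->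
  (forall i, (1 <= i <= b)%N -> 0 <= cs i) ->
  (forall i j, (1 <= i <= b)%N -> (1 <= j <= b)%N -> 0 <= L i j) ->
  (* feasibility *)
  (forall i, (1 <= i <= b)%N -> 0 <= q i) ->
  (forall i, (1 <= i <= b)%N -> 0 <= gcon L q i) ->
  (* multipliers *)
  (forall i, (1 <= i <= b)%N -> 0 <= lam i) ->
  (forall i, (1 <= i <= b)%N -> 0 <= eta i) ->
  (* stationarity *)
  (forall j, (1 <= j <= b)%N ->
     0 = dcoef b cov c cs j
         - \sum_(j <= i < b.+1) lam i * (2 * psum q i - L i j) - eta j) ->
  (* complementary slackness *)
  (forall i, (1 <= i <= b)%N -> lam i * gcon L q i = 0) ->
  (forall i, (1 <= i <= b)%N -> eta i * q i = 0) ->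
  (* support of q is exactly {k} *)
  (1 <= k <= b)%N ->
  (forall j, (1 <= j <= b)%N -> (0 < q j <-> j = k)) ->
  q k = \big[Num.max/0]_(k <= i < b.+1) L i k.
Proof.
move=> _ cov_ge0 c_gt0 cs_ge0 _ q_ge0 g_ge0 _ _ stat lam_slack eta_slack k_in supp.
have qk_gt0 : 0 < q k by apply/supp.
have q_off_k s : (1 <= s <= b)%N -> s != k -> q s = 0.
  move=> s_in s_neq_k; apply/eqP; rewrite eq_le q_ge0 // andbT leNgt.
  by apply: contra_neqN s_neq_k => /(supp s s_in).
have tail_in i : i \in index_iota k b.+1 -> (k <= i <= b)%N.
  by rewrite mem_index_iota ltnS.
have tail_range i : (k <= i <= b)%N -> (1 <= i <= b)%N.
  by case/andP: k_in => k_ge1 _ /andP[k_le_i ->]; rewrite (leq_trans k_ge1).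
have eta_k : eta k = 0.
  by move: (eta_slack k k_in) => /eqP; rewrite mulf_eq0 (gt_eqF qk_gt0) orbF => /eqP.
have [i /tail_in i_tail lam_i] : exists2 i, i \in index_iota k b.+1 & lam i != 0.
  have /has_nonzero_summand [i ir] :
      \sum_(k <= i < b.+1) lam i * (2 * psum q i - L i k) != 0.
    have := stat k k_in; rewrite eta_k subr0 => /eqP; rewrite eq_sym subr_eq0.
    by move/eqP <-; rewrite gt_eqF // dcoef_gt0.
  by rewrite mulf_eq0 negb_or => /andP[lam_i _]; exists i.
have gcon_tail := gcon_supp1 k_in q_off_k L.
have qk_eq : q k = L i k.
  apply/eqP; rewrite -subr_eq0; move: (lam_slack i (tail_range i i_tail)).
  by rewrite gcon_tail // => /eqP; rewrite !mulf_eq0 (negbTE lam_i) gt_eqF.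
symmetry; apply: (bigmax_seq_attained i _ _ (esym qk_eq)).
- exact: ltW.
- by rewrite mem_index_iota ltnS.
- move=> j /tail_in j_tail; move: (g_ge0 j (tail_range j j_tail)).
  by rewrite gcon_tail // pmulr_rge0 // subr_ge0.
Qed.
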